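(* For all $n\ge1$: $T_{nn}=U_{n,n+1}=-1$, $T_{n0}=(-1)^{n+1}4n$, $U_{n0}=(-1)^{n+1}4(2n-1)$. Moreover $T_{nj}\ne0$ only when $0\le j\le n$, and $U_{nj}\ne0$ only when $0\le j\le n+1$.
   Context: The numbers $T_{nj},U_{nj}$ (integers $n\ge0$, $j$) are defined by: $T_{nj}=U_{nj}=0$ whenever $j<0$; $T_{0j}=0$ for all $j\ge1$, $U_{01}=-1$, $U_{0j}=0$ for all $j\ge2$; $T_{10}=4$, $U_{10}=4$; and for all $n\ge1$, $j\ge0$ with $(n,j)\ne(1,0)$: $T_{nj}=-3T_{n-1,j}+U_{n-1,j}$ and $U_{nj}=-4T_{n-1,j}+U_{n-1,j}+T_{n,j-1}$. *)

From mathcomp Require Import all_boot all_order all_algebra.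
Set Implicit Arguments. Unset Strict Implicit. Unset Printing Implicit Defensive.
Import Order.TTheory GRing.Theory Num.Theory.
Local Open Scope ring_scope.

(* The defining conditions of the arrays T_{nj}, U_{nj} (n : nat, j : int).
   T_{00} and U_{00} are not specified by the source and are left free. *)
Definition TU_spec (T U : nat -> int -> int) : Prop :=
  (forall n (j : int), j < 0 -> T n j = 0 /\ U n j = 0) /\
      (forall j : int, 1 <= j -> T 0%N j = 0) /\
      U 0%N 1 = -1 /\
      (forall j : int, 2 <= j -> U 0%N j = 0) /\
      T 1%N 0 = 4 /\ U 1%N 0 = 4 /\
      (forall (n : nat) (j : int), 0 <= j -> ~ (n = 0%N /\ j = 0) ->
         T n.+1 j = -3 * T n j + U n j /\
         U n.+1 j = -4 * T n j + U n j + T n.+1 (j - 1)).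

From mathcomp Require Import all_boot all_order all_algebra.
From mathcomp Require Import zify ring.
Import Order.TTheory GRing.Theory Num.Theory.
Local Open Scope ring_scope.

(* The vanishing of [T n j] for [j > n] and of [U n j] for [j > n + 1] already
   holds at [n = 0] and propagates because [T n.+1 j] only reads column [j]
   and [U n.+1 j] reads columns [j] and [j - 1].  On the boundary diagonals
   the same recurrences collapse to [T n.+1 n.+1 = U n (n + 1)] and
   [U n.+1 (n + 2) = T n.+1 (n + 1)], so both stay equal to [U 0 1 = -1].
   In column [0] the term [T n.+1 (-1)] vanishes and the pair
   [(T n 0, U n 0)] evolves linearly from [(4, 4)]. *)

Section TU_arrays.

Variables T U : nat -> int -> int.
Hypothesis hTU : TU_spec T U.

Lemma T_neg n j : j < 0 -> T n j = 0.
Proof. by case: hTU => hneg _ /(hneg n)[]. Qed.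

Lemma U_neg n j : j < 0 -> U n j = 0.
Proof. by case: hTU => hneg _ /(hneg n)[]. Qed.

Lemma TU_rec n j : 0 <= j -> (0 < n)%N || (0 < j) ->
  T n.+1 j = -3 * T n j + U n j /\ U n.+1 j = -4 * T n j + U n j + T n.+1 (j - 1).
Proof.
move=> j_ge0 nj_pos; case: hTU => _ [_ [_ [_ [_ [_ hrec]]]]].
by apply: hrec => // -[n0 j0]; move: nj_pos; rewrite n0 j0.
Qed.

Lemma TU_vanish_above n :
  (forall j, n%:Z < j -> T n j = 0) /\ (forall j, n%:Z + 1 < j -> U n j = 0).
Proof.
case: hTU => _ [T0 [_ [U0 _]]].
elim: n => [|n [IHT IHU]]; first by split=> j j_gt; [apply: T0 | apply: U0]; lia.
have Tn1 j : n.+1%:Z < j -> T n.+1 j = 0.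
  move=> j_gt; have [-> _] := TU_rec n j ltac:(lia) ltac:(lia).
  by rewrite IHT ?IHU //; lia.
split=> // j j_gt; have [_ ->] := TU_rec n j ltac:(lia) ltac:(lia).
by rewrite IHT ?IHU ?Tn1 //; lia.
Qed.

Lemma T_diag_rec n : T n.+1 n.+1%:Z = U n (n%:Z + 1).
Proof.
have [-> _] := TU_rec n (n.+1%:Z) ltac:(lia) ltac:(lia).
rewrite (proj1 (TU_vanish_above n)); last lia.
by rewrite mulr0 add0r; congr (U _ _); lia.
Qed.

Lemma U_superdiag n : U n (n%:Z + 1) = -1.
Proof.
case: hTU => _ [_ [U01 _]].
elim: n => [//|n IH].
have [_ ->] := TU_rec n (n.+1%:Z + 1) ltac:(lia) ltac:(lia).
rewrite (proj1 (TU_vanish_above n)) ?(proj2 (TU_vanish_above n)); try lia.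
have -> : n.+1%:Z + 1 - 1 = n.+1%:Z by lia.
by rewrite T_diag_rec IH.
Qed.

Lemma T_diag n : T n.+1 n.+1%:Z = -1.
Proof. by rewrite T_diag_rec U_superdiag. Qed.

Lemma TU_col0 n :
  T n.+1 0 = (-1) ^+ n.+2 * (4 * n.+1%:Z) /\
  U n.+1 0 = (-1) ^+ n.+2 * (4 * (2 * n.+1%:Z - 1)).
Proof.
case: hTU => _ [_ [_ [_ [T10 [U10 _]]]]].
elim: n => [|n [IHT IHU]]; first by rewrite T10 U10.
have [-> ->] := TU_rec n.+1 0 ltac:(lia) ltac:(lia).
rewrite (@T_neg n.+2 (0 - 1)) // IHT IHU !exprS.
have -> : n.+2%:Z = n%:Z + 2 by lia.
have -> : n.+1%:Z = n%:Z + 1 by lia.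
by split; ring.
Qed.

End TU_arrays.

Theorem lemma8p2 (T U : nat -> int -> int) (hTU : TU_spec T U) (n : nat)
    (hn : (1 <= n)%N) :
  T n (n%:Z) = -1 /\ U n (n%:Z + 1) = -1 /\
  T n 0 = (-1) ^+ n.+1 * (4 * n%:Z) /\
  U n 0 = (-1) ^+ n.+1 * (4 * (2 * n%:Z - 1)) /\
  (forall j : int, T n j != 0 -> 0 <= j <= n%:Z) /\
  (forall j : int, U n j != 0 -> 0 <= j <= n%:Z + 1).
Proof.
case: n hn => [//|n] _.
have [T_above U_above] := TU_vanish_above _ _ hTU n.+1.
have [T_col0 U_col0] := TU_col0 _ _ hTU n.
do !split; rewrite ?(T_diag _ _ hTU) ?(U_superdiag _ _ hTU) //.
- move=> j; apply: contraNT; rewrite negb_and -!ltNge => /orP[j_neg | j_big].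
    by rewrite (T_neg _ _ hTU).
  by rewrite T_above.
- move=> j; apply: contraNT; rewrite negb_and -!ltNge => /orP[j_neg | j_big].
    by rewrite (U_neg _ _ hTU).
  by rewrite U_above.
Qed.
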